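(* Let $z$ be a positive integer and let $C$ and $D$ be quasi-cyclic LDPC codes with circulant matrices of size $z$, given by model matrices $\mathcal{H}_C$ and $\mathcal{H}_D$ (each with $L$ columns, all entries in $\{0,1,\dots,z-1\}\cup\{\infty\}$). Let $y$ be a positive integer dividing $z$. Let $C'$ (resp. $D'$) be the quasi-cyclic LDPC code with the same model matrix as $C$ (resp. $D$) but with circulant matrices of size $y$, where each finite shift $p$ is interpreted modulo $y$ (i.e. replaced by the $y\times y$ matrix $I_y(1)^{p}$). If $C$ and $D$ satisfy the twisted condition $D^{\perp}\subset C$, then $C'$ and $D'$ satisfy the twisted condition $D'^{\perp}\subset C'$.
   Context: All codes are binary linear codes over $\mathbb{F}_2$. For a linear code $D\subseteq\mathbb{F}_2^n$, its dual is $D^{\perp}=\{d'\in\mathbb{F}_2^n : d\,d'^{T}=0 \text{ for all } d\in D\}$. A pair of codes $C,D$ of the same length satisfies the twisted condition if $D^{\perp}\subset C$; if $H_C,H_D$ are parity-check matrices of $C,D$ (i.e. $C=\{x: H_Cx^T=0\}$, $D=\{x:H_Dx^T=0\}$), this is equivalent to $H_C H_D^{T}=0$. For a positive integer $z$, let $I_z(1)$ be the $z\times z$ circulant permutation matrix of a single circular right shift (entries $1$ at positions $(i,i+1)$ for $i<z$ and $(z,1)$, zero elsewhere), and $I_z(b)=I_z(1)^b$. A quasi-cyclic LDPC code with circulant matrices of size $z$ is specified by a model matrix $\mathcal{H}=(p(i,j))$ of size $J\times L$ with entries in $\{0,1,\dots,z-1\}\cup\{\infty\}$; its parity-check matrix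 $H$ is the $zJ\times zL$ binary matrix obtained by replacing each entry $p(i,j)\neq\infty$ by $I_z(p(i,j))$ and each $\infty$ by the $z\times z$ zero matrix, and the code is $\{x\in\mathbb{F}_2^{zL}: Hx^T=0\}$. The base matrix of the code is the $J\times L$ binary matrix with entry $1$ where $p(i,j)\neq\infty$ and $0$ where $p(i,j)=\infty$. *)

From HB Require Import structures.
From mathcomp Require Import all_boot all_algebra.
Set Implicit Arguments. Unset Strict Implicit. Unset Printing Implicit Defensive.
Import GRing.Theory.
Local Open Scope ring_scope.

(* A model matrix of size J x L: entry None stands for "infinity"
   (zero block), Some b for the circulant I_z(b). *)
Definition model_matrix (J L : nat) := 'I_J -> 'I_L -> option nat.

(* The block I_z(b) = I_z(1)^b has (0-based)
   entry 1 at (a, (a + b) mod z).  Hence an entry p is read modulo z. *)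
Definition qc_pcm (J L : nat) (P : model_matrix J L) (z : nat)
  : 'M['F_2]_(J * z, L * z) :=
  \matrix_(r < J * z, c < L * z)
    match insub (r %/ z)%N : option 'I_J, insub (c %/ z)%N : option 'I_L with
    | Some i, Some j =>
        match P i j with
        | Some b => ((c %% z)%N == ((r %% z) + b) %% z)%N%:R
        | None => 0
        end
    | _, _ => 0
    end.

Definition code_of (m n : nat) (H : 'M['F_2]_(m, n)) : 'rV['F_2]_n -> Prop :=
  fun x => H *m x^T = 0.

Definition dual_code (n : nat) (D : 'rV['F_2]_n -> Prop) : 'rV['F_2]_n -> Prop :=
  fun x => forall d, D d -> d *m x^T = 0.

Definition twisted (n : nat) (C D : 'rV['F_2]_n -> Prop) : Prop :=
  forall x, dual_code D x -> C x.

Definition qc_code (J L : nat) (P : model_matrix J L) (z : nat) :=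
  code_of (qc_pcm P z).

Definition model_entries_lt (J L : nat) (P : model_matrix J L) (z : nat) :=
  forall i j b, P i j = Some b -> (b < z)%N.

Arguments qc_pcm {J L} P z.
Arguments qc_code {J L} P z _.
Arguments model_entries_lt {J L} P z.

(* Block (i, a) of the rows of H_C H_D^T, paired with block (k, a') of its
   columns, is the number modulo 2 of column blocks j with both shifts p, q
   finite and a + p = a' + q (mod n).  Write z = m y.  A congruence modulo y
   lifts to exactly one of the m congruences a + t y + p = a' + q (mod z),
   t < m, so each entry of the product for circulant size y is a sum of m
   entries of the product for size z. *)

From mathcomp Require Import all_boot all_algebra.
Import GRing.Theory.

Lemma twisted_code_ofE (n m1 m2 : nat) (HC : 'M['F_2]_(m1, n)) (HD : 'M['F_2]_(m2, n)) :
  twisted (code_of HC) (code_of HD) <-> (HC *m HD^T = 0)%R.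
Proof.
split.
- move=> Ht; apply/matrixP => i r.
  have /matrixP/(_ i ord0) : code_of HC (row r HD).
    apply: Ht => d Hd.
    by rewrite -[(d *m _)%R]trmxK trmx_mul trmxK -row_mul Hd row0 trmx0.
  by rewrite !mxE => rowr0; rewrite -[RHS]rowr0; apply: eq_bigr => c _; rewrite !mxE.
- move=> HCD x Hx; apply/row_matrixP => r.
  rewrite row_mul row0; apply: Hx.
  by rewrite /code_of -[(HD *m _)%R]trmxK trmx_mul trmxK -row_mul HCD row0 trmx0.
Qed.

Lemma big_ord_mul_split {R : Type} {idx : R} (op : Monoid.com_law idx)
    (L n : nat) (F : nat -> R) :
  \big[op/idx]_(c < L * n) F c = \big[op/idx]_(j < L) \big[op/idx]_(b < n) F (j * n + b).
Proof.
rewrite -(big_mkord xpredT) big_nat_mul big_mkord; apply: eq_bigr => j _.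
rewrite -{1}(add0n (j * n)) big_addn mulSn addnK big_mkord.
by apply: eq_bigr => b _; rewrite addnC.
Qed.

(* Entry (a, a') of the block product I_n(p) I_n(q)^T, or 0 if a block is zero. *)
Definition circ_overlap (n : nat) (o1 o2 : option nat) (a a' : nat) : 'F_2 :=
  match o1, o2 with
  | Some p, Some q => (a + p == a' + q %[mod n])%:R%R
  | _, _ => 0%R
  end.

Lemma sum_F2_eqn_mod_pair (n x x' : nat) : 0 < n ->
  (\sum_(b < n) ((b == x %[mod n])%:R * (b == x' %[mod n])%:R : 'F_2)
   = (x == x' %[mod n])%:R)%R.
Proof.
move=> n_gt0; rewrite (bigD1 (Ordinal (ltn_pmod x n_gt0))) //= !modn_mod eqxx mul1r.
rewrite big1 ?addr0 // => b; rewrite -(inj_eq val_inj) /= (modn_small (ltn_ord b)).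
by move=> /negbTE ->; rewrite mul0r.
Qed.

Definition qc_pcm_row {J L : nat} (P : model_matrix J L) n (i : 'I_J) (a c : nat) : 'F_2 :=
  match insub (c %/ n) : option 'I_L with
  | Some j => if P i j is Some p then (c == a + p %[mod n])%:R%R else 0%R
  | None => 0%R
  end.

Lemma qc_pcmE {J L : nat} {P : model_matrix J L} {n : nat} {i : 'I_J} {r : 'I_(J * n)}
    (ri : val i = r %/ n) (c : 'I_(L * n)) :
  qc_pcm P n r c = qc_pcm_row P n i (r %% n) c.
Proof. by rewrite mxE -ri valK. Qed.

Lemma qc_pcm_row_block {J L : nat} (P : model_matrix J L) n (i : 'I_J) (j : 'I_L) a (b : 'I_n) :
  qc_pcm_row P n i a (j * n + b) =
  if P i j is Some p then (val b == a + p %[mod n])%:R%R else 0%R.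
Proof.
have n_gt0 : 0 < n by case: n b => [[]|].
by rewrite /qc_pcm_row divnMDl // divn_small // addn0 valK modnMDl modn_small.
Qed.

Lemma qc_pcm_mul_tr_entry {J1 J2 L : nat} (P1 : model_matrix J1 L) (P2 : model_matrix J2 L)
    n (i : 'I_J1) (k : 'I_J2) (r : 'I_(J1 * n)) (r' : 'I_(J2 * n)) :
  val i = r %/ n -> val k = r' %/ n ->
  (qc_pcm P1 n *m (qc_pcm P2 n)^T)%R r r' =
  (\sum_(j < L) circ_overlap n (P1 i j) (P2 k j) (r %% n) (r' %% n))%R.
Proof.
move=> ri r'k; rewrite mxE; under eq_bigr do rewrite (qc_pcmE ri) mxE (qc_pcmE r'k).
rewrite (big_ord_mul_split _ L n
  (fun c => qc_pcm_row P1 n i (r %% n) c * qc_pcm_row P2 n k (r' %% n) c)%R).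
apply: eq_bigr => j _; under eq_bigr do rewrite !qc_pcm_row_block.
rewrite /circ_overlap; case: (P1 i j) => [p|]; case: (P2 k j) => [q|];
  try by rewrite big1 // => b _; rewrite ?mul0r ?mulr0.
have : 0 < J1 * n by apply: leq_ltn_trans (ltn_ord r).
rewrite muln_gt0 => /andP[_ n_gt0].
by rewrite sum_F2_eqn_mod_pair // !modnDml.
Qed.

Lemma qc_pcm_mul_tr_eq0 {J1 J2 L : nat} {P1 : model_matrix J1 L} {P2 : model_matrix J2 L}
    {n : nat} :
  0 < n ->
  (qc_pcm P1 n *m (qc_pcm P2 n)^T)%R = 0%R <->
  forall (i : 'I_J1) (k : 'I_J2) a a', a < n -> a' < n ->
    (\sum_(j < L) circ_overlap n (P1 i j) (P2 k j) a a' = 0)%R.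
Proof.
move=> n_gt0; split.
- move=> /matrixP P12_0 i k a a' ltan lta'n.
  have divE (x : nat) b : b < n -> (x * n + b) %/ n = x.
    by move=> ltbn; rewrite divnMDl // divn_small // addn0.
  have ltr : i * n + a < J1 * n by rewrite -ltn_divLR // divE.
  have ltr' : k * n + a' < J2 * n by rewrite -ltn_divLR // divE.
  have := P12_0 (Ordinal ltr) (Ordinal ltr').
  rewrite (qc_pcm_mul_tr_entry _ _ _ i k) ?divE // mxE.
  by rewrite /= !modnMDl !modn_small.
- move=> sum0; apply/matrixP => r r'.
  have lti : r %/ n < J1 by rewrite ltn_divLR.
  have ltk : r' %/ n < J2 by rewrite ltn_divLR.
  by rewrite (qc_pcm_mul_tr_entry _ _ _ (Ordinal lti) (Ordinal ltk)) // mxE sum0 ?ltn_mod.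
Qed.

Section LiftCongruence.

Context {m y : nat}.
Hypotheses (m_gt0 : 0 < m) (y_gt0 : 0 < y).

Lemma lift_mod_uniq {A B t1 t2 : nat} : t1 < m -> t2 < m ->
  A + t1 * y = B %[mod m * y] -> A + t2 * y = B %[mod m * y] -> t1 = t2.
Proof.
move=> lt1m lt2m e1 e2.
have : A + t1 * y == A + t2 * y %[mod m * y] by rewrite e1 e2.
by rewrite eqn_modDl -!muln_modl !modn_small // eqn_pmul2r // => /eqP.
Qed.

(* Adding the multiple A m y of m y to B makes B' - A a natural number. *)
Lemma lift_mod_exists {A B : nat} : A = B %[mod y] ->
  exists2 t, t < m & A + t * y = B %[mod m * y].
Proof.
move=> eqAB; set B' := A * (m * y) + B; set q := (B' - A) %/ y.
have leAB' : A <= B' by rewrite (leq_trans (leq_pmulr _ _) (leq_addr _ _)) ?muln_gt0 ?m_gt0.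
have dvd_y : y %| B' - A by rewrite -eqn_mod_dvd // /B' mulnA modnMDl eqAB.
have qyE : A + q * y = B' by rewrite divnK // subnKC.
exists (q %% m); first by rewrite ltn_mod.
by rewrite -(modnMDl (q %/ m)) mulnA addnCA -mulnDl -divn_eq qyE /B' modnMDl.
Qed.

Lemma eqn_mod_F2_sum_lift (A B : nat) :
  ((A == B %[mod y])%:R : 'F_2)%R =
  (\sum_(t < m) (A + t * y == B %[mod m * y])%:R)%R.
Proof.
have dvd_y : y %| m * y by rewrite dvdn_mull.
case: eqP => [eqAB | neqAB].
- have [t0 ltt0m e0] := lift_mod_exists eqAB.
  rewrite (bigD1 (Ordinal ltt0m)) //= e0 eqxx big1 ?addr0 // => t /negP t_neq.
  case: eqP => // et; case: t_neq; apply/eqP/val_inj.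
  exact: lift_mod_uniq (ltn_ord t) ltt0m et e0.
- rewrite big1 // => t _; case: eqP => // et; case: neqAB.
  by rewrite -(modnMDl t A) addnC -(modn_dvdm _ dvd_y) et (modn_dvdm _ dvd_y).
Qed.

Lemma circ_overlap_lift (o1 o2 : option nat) (a a' : nat) :
  circ_overlap y o1 o2 a a' =
  (\sum_(t < m) circ_overlap (m * y) o1 o2 ((a + t * y) %% (m * y)) (a' %% (m * y)))%R.
Proof.
rewrite /circ_overlap; case: o1 => [p|]; case: o2 => [q|]; try by rewrite big1.
rewrite eqn_mod_F2_sum_lift; apply: eq_bigr => t _.
by rewrite !modnDml addnAC.
Qed.

End LiftCongruence.

Theorem mainTheorem1 (z y JC JD L : nat)
  (HC : model_matrix JC L) (HD : model_matrix JD L) :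
  (0 < z)%N -> (0 < y)%N -> (y %| z)%N ->
  model_entries_lt HC z -> model_entries_lt HD z ->
  twisted (qc_code HC z) (qc_code HD z) ->
  twisted (qc_code HC y) (qc_code HD y).
Proof.
(* Shifts are read modulo the circulant size. *)
move=> z_gt0 y_gt0 dvd_yz _ _.
rewrite /qc_code => /twisted_code_ofE /(qc_pcm_mul_tr_eq0 z_gt0) overlap_z0.
apply/twisted_code_ofE/(qc_pcm_mul_tr_eq0 y_gt0) => i k a a' _ _.
have m_gt0 : 0 < z %/ y by rewrite divn_gt0 // dvdn_leq.
under eq_bigr do rewrite (circ_overlap_lift m_gt0 y_gt0) divnK //.
rewrite exchange_big big1 //= => t _.
by apply: overlap_z0; rewrite ltn_mod.
Qed.
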